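(* Let $\nu = e^{-f}$ on $\mathbb{R}^n$ be $(L,M)$-smooth and let $0 \le t \le \min\{\frac{1}{8L},\frac{1}{M}\}$. For $x\in\mathbb{R}^n$ define $G = G(x) = (I + t\nabla^2 f(x))^{-2}$ and \[ \tilde\mu(x) = -t\,\nabla^2 f(x)\,G\,\nabla f(x) - t\sqrt{G}\,\mathrm{Tr}(\nabla^3 f(x)\,G) - \nabla\cdot G. \] Then for all $x\in\mathbb{R}^n$, \[ \tfrac34 I \preceq G(x) \preceq \tfrac43 I \qquad\text{and}\qquad \|\tilde\mu(x)\| \le \tfrac43 tL\|\nabla f(x)\| + 6\,t\,n^{3/2} M. \]
   Context: $\nu=e^{-f}$ is $(L,M)$-smooth if $f$ is three times differentiable, $\|\nabla^2 f(x)\|_{\mathrm{op}} \le L$ for all $x$, and $\|\nabla^2 f(x) - \nabla^2 f(y)\|_{\mathrm{op}} \le M\|x-y\|$ for all $x,y$. $\sqrt{G}$ is the positive definite square root. $\mathrm{Tr}(\nabla^3 f(x)\,G)\in\mathbb{R}^n$ is the vector whose $i$-th component is $\mathrm{Tr}(\nabla_i\nabla^2 f(x)\,G)$, where $\nabla_i\nabla^2 f(x)$ is the matrix with $(j,k)$ entry $\frac{\partial^3 f(x)}{\partial x_i\partial x_j\partial x_k}$. For a matrix-valued function $G(x)$ (here with $t$ fixed), $\nabla\cdot G(x)\in\mathbb{R}^n$ is the vector whose $i$-th component is $\sum_{j=1}^n \frac{\partial G_{ij}(x)}{\partial x_j}$. *)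

From Stdlib Require Import Reals.
From mathcomp Require Import ssreflect ssrfun ssrbool eqtype ssrnat seq fintype bigop.
Set Implicit Arguments.
Unset Strict Implicit.
Unset Printing Implicit Defensive.
Open Scope R_scope.

Definition vec (n : nat) := 'I_n -> R.
Definition mat (n : nat) := 'I_n -> 'I_n -> R.

Definition rsum (n : nat) (F : 'I_n -> R) : R := \big[Rplus/0]_(i < n) F i.

Definition vadd n (u v : vec n) : vec n := fun i => u i + v i.
Definition vsub n (u v : vec n) : vec n := fun i => u i - v i.
Definition vscale n (c : R) (v : vec n) : vec n := fun i => c * v i.
Definition vopp n (v : vec n) : vec n := fun i => - v i.
Definition dot n (u v : vec n) : R := rsum (fun i => u i * v i).
Definition vnorm n (v : vec n) : R := sqrt (dot v v).
Definition basis {n} (k : 'I_n) : vec n := fun i => if i == k then 1 else 0.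

Definition idm (n : nat) : mat n := fun i j => if i == j then 1 else 0.
Arguments idm : clear implicits.
Definition madd n (A B : mat n) : mat n := fun i j => A i j + B i j.
Definition msub n (A B : mat n) : mat n := fun i j => A i j - B i j.
Definition mscale n (c : R) (A : mat n) : mat n := fun i j => c * A i j.
Definition mm n (A B : mat n) : mat n := fun i k => rsum (fun j => A i j * B j k).
Definition mv n (A : mat n) (v : vec n) : vec n := fun i => rsum (fun j => A i j * v j).
Definition mtrace n (A : mat n) : R := rsum (fun i => A i i).
(* Frobenius norm (used only for the o(|h|) remainder of derivatives) *)
Definition mnorm n (A : mat n) : R := sqrt (rsum (fun i => rsum (fun j => A i j * A i j))).
Definition quad n (A : mat n) (v : vec n) : R := dot v (mv A v).

Definition opnorm_le n (A : mat n) (c : R) : Prop :=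
  forall v : vec n, vnorm (mv A v) <= c * vnorm v.

Definition is_inverse n (A B : mat n) : Prop := mm A B = idm n /\ mm B A = idm n.

Definition is_pd_sqrt n (S G : mat n) : Prop :=
  mm S S = G /\ (forall i j, S i j = S j i) /\
  (forall v : vec n, (exists i, v i <> 0) -> 0 < quad S v).

Definition has_grad n (f : vec n -> R) (g : vec n -> vec n) : Prop :=
  forall x eps, 0 < eps -> exists delta, 0 < delta /\
    forall h, vnorm h < delta ->
      Rabs (f (vadd x h) - f x - dot (g x) h) <= eps * vnorm h.

(* Frechet differentiability of a vector field: H x i j = d g_i / d x_j *)
Definition has_jac n (g : vec n -> vec n) (H : vec n -> mat n) : Prop :=
  forall x eps, 0 < eps -> exists delta, 0 < delta /\
    forall h, vnorm h < delta ->
      vnorm (vsub (vsub (g (vadd x h)) (g x)) (mv (H x) h)) <= eps * vnorm h.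

(* Frechet differentiability of a matrix field: T x i j k = d H_jk / d x_i *)
Definition has_mderiv n (H : vec n -> mat n) (T : vec n -> 'I_n -> mat n) : Prop :=
  forall x eps, 0 < eps -> exists delta, 0 < delta /\
    forall h, vnorm h < delta ->
      mnorm (fun j k => H (vadd x h) j k - H x j k - rsum (fun i => h i * T x i j k))
        <= eps * vnorm h.

(* nu = e^{-f} is (L,M)-smooth, with g = grad f, H = Hess f, T = nabla^3 f *)
Definition LM_smooth n (f : vec n -> R) (g : vec n -> vec n) (H : vec n -> mat n)
  (T : vec n -> 'I_n -> mat n) (L M : R) : Prop :=
  has_grad f g /\ has_jac g H /\ has_mderiv H T /\
  (forall x, opnorm_le (H x) L) /\
  (forall x y, opnorm_le (msub (H x) (H y)) (M * vnorm (vsub x y))).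

Definition has_partial n (F : vec n -> R) (x : vec n) (k : 'I_n) (l : R) : Prop :=
  derivable_pt_lim (fun s => F (vadd x (vscale s (basis k)))) 0 l.

(* Tr(nabla^3 f(x) G): i-th component Tr(nabla_i nabla^2 f(x) G) *)
Definition tr3 n (Tx : 'I_n -> mat n) (Gx : mat n) : vec n :=
  fun i => mtrace (mm (Tx i) Gx).

(* divergence of a matrix field, given its partial derivatives DGx i j k = d G_ij / d x_k *)
Definition mdiv n (DGx : 'I_n -> 'I_n -> 'I_n -> R) : vec n :=
  fun i => rsum (fun j => DGx i j j).

Definition mu_tilde n (t : R) (gx : vec n) (Hx : mat n) (Tx : 'I_n -> mat n)
  (Gx Sx : mat n) (DGx : 'I_n -> 'I_n -> 'I_n -> R) : vec n :=
  vsub (vsub (vscale (- t) (mv (mm Hx Gx) gx)) (vscale t (mv Sx (tr3 Tx Gx)))) (mdiv DGx).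

(* With B = I + t Hess f(x), the bound t ||Hess f|| <= 1/8 gives 7/8 |w| <= |B w| <= 9/8 |w|,
   so ||G|| = ||B^-2|| <= 64/49; writing quad G v = |S v|^2 and v = S B^2 S v (S commutes with
   B^2 = G^-1) gives the quadratic-form bounds. The Lipschitz bound on the Hessian bounds each
   slice of the third derivative by M, and differentiating G B^2 = I along e_k gives
   d_k G = - G (t T_k B + B t T_k) G, of operator norm at most 4 t M. Every coordinate of
   Tr(nabla^3 f G) and of div G is a sum of n matrix entries bounded by such operator norms,
   whence the factor n^(3/2). *)

From Stdlib Require Import Reals Lra FunctionalExtensionality.
From mathcomp Require Import ssreflect ssrfun ssrbool eqtype ssrnat seq fintype bigop.
From HB Require Import structures.
Open Scope R_scope.
Set Implicit Arguments.

HB.instance Definition _ := Monoid.isComLaw.Build R 0 Rplus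
  (fun a b c => esym (Rplus_assoc a b c)) Rplus_comm Rplus_0_l.

Section FiniteSums.
Variable n : nat.
Implicit Types F G : 'I_n -> R.

Lemma rsum_ext F G : (forall i, F i = G i) -> rsum F = rsum G.
Proof. by move=> eFG; apply: eq_bigr => i _. Qed.

Lemma rsum_plus F G : rsum (fun i => F i + G i) = rsum F + rsum G.
Proof. exact: big_split. Qed.

Lemma rsum_scal c F : rsum (fun i => c * F i) = c * rsum F.
Proof. by apply: esym; apply: (big_morph (fun y => c * y)) => [a b|]; ring. Qed.

Lemma rsum_minus F G : rsum (fun i => F i - G i) = rsum F - rsum G.
Proof.
rewrite (@rsum_ext _ (fun i => F i + -1 * G i)); last by move=> i; ring.
by rewrite rsum_plus rsum_scal; ring.
Qed.

Lemma rsum_le F G : (forall i, F i <= G i) -> rsum F <= rsum G.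
Proof. by move=> leFG; apply: (big_ind2 Rle) => *; [lra | lra | apply: leFG]. Qed.

Lemma rsum_const c : rsum (fun _ : 'I_n => c) = INR n * c.
Proof.
rewrite /rsum big_const_ord; elim: n => [|m IHm] /=; first ring.
by rewrite IHm; case: m {IHm} => [|m] /=; ring.
Qed.

Lemma rsum_ge0 F : (forall i, 0 <= F i) -> 0 <= rsum F.
Proof. by move=> F_ge0; rewrite -(Rmult_0_r (INR n)) -rsum_const; apply: rsum_le. Qed.

Lemma Rabs_rsum_le F c : (forall i, Rabs (F i) <= c) -> Rabs (rsum F) <= INR n * c.
Proof.
move=> leFc; rewrite -rsum_const.
apply: Rle_trans (@rsum_le (fun i => Rabs (F i)) _ leFc).
apply: (big_ind2 (fun a b => Rabs a <= b)) => [|a b a' b' ? ?|i _].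
- by rewrite Rabs_R0; lra.
- by apply: Rle_trans (Rabs_triang a a') _; lra.
- exact: Rle_refl.
Qed.

Lemma rsum_swap (F : 'I_n -> 'I_n -> R) :
  rsum (fun i => rsum (F i)) = rsum (fun j => rsum (fun i => F i j)).
Proof. exact: exchange_big. Qed.

Lemma rsum_delta k F : rsum (fun i => if i == k then F i else 0) = F k.
Proof.
rewrite /rsum (bigD1 k) //= eqxx big1 ?Rplus_0_r //.
by move=> i /negbTE ->.
Qed.

Lemma rsum_term_le F k : (forall i, 0 <= F i) -> F k <= rsum F.
Proof.
move=> F_ge0; rewrite /rsum (bigD1 k) //= -{1}(Rplus_0_r (F k)).
by apply: Rplus_le_compat_l; apply: (big_ind (Rle 0)) => *; [lra | lra | apply: F_ge0].
Qed.

End FiniteSums.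

Section EuclideanNorm.
Variable n : nat.
Implicit Types u v w : vec n.

Lemma dot_comm u v : dot u v = dot v u.
Proof. by apply: rsum_ext => i; ring. Qed.

Lemma dot_ge0 v : 0 <= dot v v.
Proof. by apply: rsum_ge0 => i; apply: Rle_0_sqr. Qed.

Lemma dot_self_eq0 v i : dot v v = 0 -> v i = 0.
Proof.
move=> vv0; have := rsum_term_le (fun i => v i * v i) i (fun i => Rle_0_sqr (v i)).
by rewrite -/(dot v v) vv0; nra.
Qed.

(* Expand 0 <= |u - l v|^2 at l = (u.v) / (v.v). *)
Lemma dot_Cauchy_Schwarz u v : dot u v * dot u v <= dot u u * dot v v.
Proof.
have [vv0|vv_gt0] : dot v v = 0 \/ 0 < dot v v by have := dot_ge0 v; lra.
  have -> : dot u v = 0.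
    rewrite /dot (@rsum_ext _ _ (fun _ => 0)); first by rewrite rsum_const; ring.
    by move=> i; rewrite (dot_self_eq0 i vv0); ring.
  by rewrite vv0; lra.
set l := dot u v / dot v v.
have : 0 <= rsum (fun i => (u i - l * v i) * (u i - l * v i)).
  by apply: rsum_ge0 => i; apply: Rle_0_sqr.
rewrite (@rsum_ext _ _ (fun i => u i * u i + (-2 * l * (u i * v i) + l * l * (v i * v i))));
  last by move=> i; ring.
rewrite !rsum_plus !rsum_scal -/(dot u u) -/(dot u v) -/(dot v v) /l => expand_ge0.
have : 0 <= dot u u * dot v v - dot u v * dot u v.
  have -> : dot u u * dot v v - dot u v * dot u v =
    (dot u u + (-2 * (dot u v / dot v v) * dot u v
       + dot u v / dot v v * (dot u v / dot v v) * dot v v)) * dot v v by field; lra.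
  by apply: Rmult_le_pos; lra.
lra.
Qed.

Lemma vnorm_ge0 v : 0 <= vnorm v.
Proof. exact: sqrt_pos. Qed.

Lemma vnorm_sqr v : vnorm v * vnorm v = dot v v.
Proof. exact: sqrt_sqrt (dot_ge0 v). Qed.

Lemma Rabs_dot_le u v : Rabs (dot u v) <= vnorm u * vnorm v.
Proof.
rewrite -(Rabs_pos_eq (vnorm u * vnorm v)); last by apply: Rmult_le_pos; apply: vnorm_ge0.
apply: Rsqr_le_abs_0; rewrite /Rsqr.
by have := dot_Cauchy_Schwarz u v; rewrite -!vnorm_sqr; nra.
Qed.

Lemma vnorm_le_of_dot v c : 0 <= c -> dot v v <= c * c -> vnorm v <= c.
Proof. by move=> c_ge0 vv_le; rewrite /vnorm -(sqrt_square c) //; apply: sqrt_le_1_alt. Qed.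

Lemma vnorm_ext u v : (forall i, u i = v i) -> vnorm u = vnorm v.
Proof. by move=> euv; rewrite (functional_extensionality _ _ euv). Qed.

Lemma vnorm_vadd u v : vnorm (vadd u v) <= vnorm u + vnorm v.
Proof.
apply: vnorm_le_of_dot; first by have := vnorm_ge0 u; have := vnorm_ge0 v; lra.
rewrite /dot (@rsum_ext _ _ (fun i => u i * u i + (2 * (u i * v i) + v i * v i)));
  last by move=> i; rewrite /vadd; ring.
rewrite !rsum_plus rsum_scal -/(dot u u) -/(dot u v) -/(dot v v) -!vnorm_sqr.
by have := Rabs_dot_le u v; have := Rle_abs (dot u v); nra.
Qed.

Lemma vnorm_vscale c v : vnorm (vscale c v) = Rabs c * vnorm v.
Proof.
rewrite /vnorm /dot (@rsum_ext _ _ (fun i => c * c * (v i * v i)));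
  last by move=> i; rewrite /vscale; ring.
by rewrite rsum_scal sqrt_mult ?sqrt_Rsqr_abs //; [apply: Rle_0_sqr | apply: dot_ge0].
Qed.

Lemma vnorm_vsub u v : vnorm (vsub u v) <= vnorm u + vnorm v.
Proof.
rewrite (@vnorm_ext _ (vadd u (vscale (-1) v)));
  last by move=> i; rewrite /vsub /vadd /vscale; ring.
by apply: Rle_trans (vnorm_vadd _ _) _; rewrite vnorm_vscale Rabs_Ropp Rabs_R1; lra.
Qed.

Lemma Rabs_coord_le v i : Rabs (v i) <= vnorm v.
Proof.
rewrite -(sqrt_Rsqr_abs (v i)); apply: sqrt_le_1_alt.
exact: (rsum_term_le _ i (fun i => Rle_0_sqr (v i))).
Qed.

Lemma vnorm_le_coord v c : 0 <= c -> (forall i, Rabs (v i) <= c) -> vnorm v <= sqrt (INR n) * c.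
Proof.
move=> c_ge0 le_vc; apply: vnorm_le_of_dot; first by apply: Rmult_le_pos; first apply: sqrt_pos.
have -> : sqrt (INR n) * c * (sqrt (INR n) * c) = INR n * (c * c).
  by have := sqrt_sqrt (INR n) (pos_INR n); nra.
rewrite -rsum_const; apply: rsum_le => i.
have := Rsqr_abs (v i); have := le_vc i; have := Rabs_pos (v i); rewrite /Rsqr; nra.
Qed.

Lemma vnorm_basis (k : 'I_n) : vnorm (basis k) = 1.
Proof.
rewrite /vnorm /dot (@rsum_ext _ _ (fun j => if j == k then 1 else 0)) ?rsum_delta ?sqrt_1 //.
by move=> j; rewrite /basis; case: (j == k); ring.
Qed.

Lemma vnorm_rsum_le {F : 'I_n -> 'I_n -> R} {c : R} : 0 <= c -> (forall i j, Rabs (F i j) <= c) ->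
  vnorm (fun i => rsum (F i)) <= INR n * sqrt (INR n) * c.
Proof.
move=> c_ge0 leFc; rewrite (Rmult_comm (INR n)) Rmult_assoc.
apply: vnorm_le_coord => [|i]; first by apply: Rmult_le_pos; first apply: pos_INR.
exact: Rabs_rsum_le.
Qed.

End EuclideanNorm.

Lemma vnorm_vec0 (v : vec 0) : vnorm v = 0.
Proof. by rewrite /vnorm /dot /rsum big_ord0 sqrt_0. Qed.

Section Matrices.
Variable n : nat.
Implicit Types (A B C S : mat n) (u v : vec n).

Lemma mv_basis A k i : mv A (basis k) i = A i k.
Proof.
rewrite /mv (@rsum_ext _ _ (fun j => if j == k then A i j else 0)) ?rsum_delta //.
by move=> j; rewrite /basis; case: (j == k); ring.
Qed.

Lemma mv_idm v : mv (idm n) v = v.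
Proof.
apply: functional_extensionality => i; rewrite /mv.
rewrite (@rsum_ext _ _ (fun j => if j == i then v j else 0)) ?rsum_delta //.
by move=> j; rewrite /idm eq_sym; case: (j == i); ring.
Qed.

Lemma mv_mm A B v : mv (mm A B) v = mv A (mv B v).
Proof.
apply: functional_extensionality => i; rewrite /mv /mm.
rewrite (@rsum_ext _ _ (fun j => rsum (fun l => A i l * B l j * v j)));
  last by move=> j; rewrite Rmult_comm -rsum_scal; apply: rsum_ext => l; ring.
rewrite rsum_swap; apply: rsum_ext => l; rewrite -rsum_scal; apply: rsum_ext => j; ring.
Qed.

Lemma mv_madd A B v : mv (madd A B) v = vadd (mv A v) (mv B v).
Proof.
apply: functional_extensionality => i; rewrite /mv /vadd -rsum_plus.
by apply: rsum_ext => j; rewrite /madd; ring.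
Qed.

Lemma mv_msub A B v : mv (msub A B) v = vsub (mv A v) (mv B v).
Proof.
apply: functional_extensionality => i; rewrite /mv /vsub -rsum_minus.
by apply: rsum_ext => j; rewrite /msub; ring.
Qed.

Lemma mv_mscale c A v : mv (mscale c A) v = vscale c (mv A v).
Proof.
apply: functional_extensionality => i; rewrite /mv /vscale -rsum_scal.
by apply: rsum_ext => j; rewrite /mscale; ring.
Qed.

Lemma mv_inj A B : (forall v, mv A v = mv B v) -> A = B.
Proof.
move=> eAB; do 2 apply: functional_extensionality => ? .
by rewrite -!mv_basis eAB.
Qed.

Lemma mm_assoc A B C : mm (mm A B) C = mm A (mm B C).
Proof. by apply: mv_inj => v; rewrite !mv_mm. Qed.

Lemma mm_idm_l A : mm (idm n) A = A.
Proof. by apply: mv_inj => v; rewrite mv_mm mv_idm. Qed.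

Lemma mm_idm_r A : mm A (idm n) = A.
Proof. by apply: mv_inj => v; rewrite mv_mm mv_idm. Qed.

Lemma dot_mv_sym S u v : (forall i j, S i j = S j i) -> dot u (mv S v) = dot (mv S u) v.
Proof.
move=> S_sym; rewrite /dot /mv.
rewrite (@rsum_ext _ _ (fun i => rsum (fun j => u i * S i j * v j)));
  last by move=> i; rewrite -rsum_scal; apply: rsum_ext => j; ring.
rewrite rsum_swap; apply: rsum_ext => j.
by rewrite Rmult_comm -rsum_scal; apply: rsum_ext => i; rewrite S_sym; ring.
Qed.

Lemma opnorm_le_mnorm A : opnorm_le A (mnorm A).
Proof.
move=> v; apply: vnorm_le_of_dot.
  by apply: Rmult_le_pos; [apply: sqrt_pos | apply: vnorm_ge0].
have -> : mnorm A * vnorm v * (mnorm A * vnorm v) =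
          mnorm A * mnorm A * (vnorm v * vnorm v) by ring.
rewrite vnorm_sqr /mnorm sqrt_sqrt;
  last by apply: rsum_ge0 => i; apply: rsum_ge0 => j; apply: Rle_0_sqr.
rewrite Rmult_comm -rsum_scal; apply: rsum_le => i; rewrite Rmult_comm.
exact: (dot_Cauchy_Schwarz (A i) v).
Qed.

Lemma Rabs_entry_le_mnorm A i j : Rabs (A i j) <= mnorm A.
Proof.
rewrite -(sqrt_Rsqr_abs (A i j)) /mnorm; apply: sqrt_le_1_alt.
apply: Rle_trans (rsum_term_le _ i _); last by move=> l; apply: rsum_ge0 => m; apply: Rle_0_sqr.
exact: (rsum_term_le _ j (fun m => Rle_0_sqr (A i m))).
Qed.

Lemma Rabs_entry_le_opnorm A c i j : opnorm_le A c -> Rabs (A i j) <= c.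
Proof.
move=> hA; rewrite -mv_basis; apply: Rle_trans (Rabs_coord_le _ i) _.
by have := hA (basis j); rewrite vnorm_basis Rmult_1_r.
Qed.

Lemma opnorm_le_ge0 A c : (0 < n)%N -> opnorm_le A c -> 0 <= c.
Proof.
move=> n_gt0 /(Rabs_entry_le_opnorm (Ordinal n_gt0) (Ordinal n_gt0)).
by have := Rabs_pos (A (Ordinal n_gt0) (Ordinal n_gt0)); lra.
Qed.

Lemma opnorm_le_weaken A c d : c <= d -> opnorm_le A c -> opnorm_le A d.
Proof. by move=> le_cd hA v; apply: Rle_trans (hA v) _; have := vnorm_ge0 v; nra. Qed.

Lemma opnorm_le_idm : opnorm_le (idm n) 1.
Proof. by move=> v; rewrite mv_idm; lra. Qed.

Lemma opnorm_le_madd A B a b : opnorm_le A a -> opnorm_le B b -> opnorm_le (madd A B) (a + b).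
Proof.
move=> hA hB v; rewrite mv_madd; apply: Rle_trans (vnorm_vadd _ _) _.
by have := hA v; have := hB v; lra.
Qed.

Lemma opnorm_le_msub A B a b : opnorm_le A a -> opnorm_le B b -> opnorm_le (msub A B) (a + b).
Proof.
move=> hA hB v; rewrite mv_msub; apply: Rle_trans (vnorm_vsub _ _) _.
by have := hA v; have := hB v; lra.
Qed.

Lemma opnorm_le_mscale A c a : opnorm_le A a -> opnorm_le (mscale c A) (Rabs c * a).
Proof.
move=> hA v; rewrite mv_mscale vnorm_vscale Rmult_assoc.
by apply: Rmult_le_compat_l; [apply: Rabs_pos | apply: hA].
Qed.

Lemma opnorm_le_mm A B a b : 0 <= a -> opnorm_le A a -> opnorm_le B b -> opnorm_le (mm A B) (a * b).
Proof.
move=> a_ge0 hA hB v; rewrite mv_mm Rmult_assoc; apply: Rle_trans (hA _) _.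
exact: Rmult_le_compat_l.
Qed.

Lemma vnorm_tr3_le {Tx : 'I_n -> mat n} {A a c} : 0 <= a -> 0 <= c ->
  (forall i, opnorm_le (Tx i) a) -> opnorm_le A c ->
  vnorm (tr3 Tx A) <= INR n * sqrt (INR n) * (a * c).
Proof.
move=> a_ge0 c_ge0 hT hA; apply: vnorm_rsum_le => [|i j]; first exact: Rmult_le_pos.
exact: Rabs_entry_le_opnorm (opnorm_le_mm a_ge0 (hT i) hA).
Qed.

Lemma vnorm_mdiv_le {DGx : 'I_n -> 'I_n -> 'I_n -> R} {c} : 0 <= c ->
  (forall k, opnorm_le (fun i j => DGx i j k) c) -> vnorm (mdiv DGx) <= INR n * sqrt (INR n) * c.
Proof.
move=> c_ge0 hDG; apply: vnorm_rsum_le => // i j.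
exact: Rabs_entry_le_opnorm (hDG j).
Qed.

Lemma quad_le_opnorm A c v : opnorm_le A c -> quad A v <= c * (vnorm v * vnorm v).
Proof.
move=> hA; apply: Rle_trans (Rle_abs _) _; apply: Rle_trans (Rabs_dot_le _ _) _.
by have := hA v; have := vnorm_ge0 v; nra.
Qed.

End Matrices.

Section InverseAndSquareRoot.
Variable n : nat.
Implicit Types (A G S : mat n) (v w : vec n).

Lemma opnorm_le_inverse A G c : 0 < c -> (forall w, c * vnorm w <= vnorm (mv A w)) ->
  mm A G = idm n -> opnorm_le G (/ c).
Proof.
move=> c_gt0 A_lower AG1 v; apply: (Rmult_le_reg_l c) => //.
rewrite -Rmult_assoc Rinv_r ?Rmult_1_l; last lra.
by have := A_lower (mv G v); rewrite -mv_mm AG1 mv_idm.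
Qed.

Lemma quad_pd_sqrt S G v : is_pd_sqrt S G -> quad G v = dot (mv S v) (mv S v).
Proof. by case=> [SS_G [S_sym _]]; rewrite /quad -SS_G mv_mm dot_mv_sym. Qed.

(* A square root of G commutes with G, hence with G^-1 = A. *)
Lemma pd_sqrt_inverse A G S : is_inverse A G -> is_pd_sqrt S G -> mm (mm S A) S = idm n.
Proof.
move=> [AG1 GA1] [SS_G _].
have GS_SG : mm G S = mm S G by rewrite -SS_G mm_assoc.
have SA_AS : mm S A = mm A S.
  by rewrite -[mm S A]mm_idm_l -AG1 !mm_assoc -(mm_assoc G) GS_SG mm_assoc GA1 mm_idm_r.
by rewrite SA_AS mm_assoc SS_G.
Qed.

Lemma quad_inverse_ge A G S a v : is_inverse A G -> is_pd_sqrt S G -> opnorm_le A a ->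
  vnorm v * vnorm v <= a * quad G v.
Proof.
move=> AG hS hA; rewrite (quad_pd_sqrt v hS); set u := mv S v.
have v_eq : v = mv S (mv A u) by rewrite /u -!mv_mm (pd_sqrt_inverse AG hS) mv_idm.
have S_sym : forall i j, S i j = S j i by case: hS => _ [].
rewrite vnorm_sqr {2}v_eq dot_mv_sym // -/u dot_comm -vnorm_sqr.
apply: Rle_trans (Rle_abs _) _; apply: Rle_trans (Rabs_dot_le _ _) _.
by have := hA u; have := vnorm_ge0 u; nra.
Qed.

Lemma opnorm_le_pd_sqrt S G c : 0 <= c -> is_pd_sqrt S G -> opnorm_le G (c * c) ->
  opnorm_le S c.
Proof.
move=> c_ge0 hS hG w; apply: vnorm_le_of_dot; first by have := vnorm_ge0 w; nra.
rewrite -(quad_pd_sqrt w hS); apply: Rle_trans (quad_le_opnorm w hG) _; right; ring.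
Qed.

End InverseAndSquareRoot.

Definition shift n t (A : mat n) : mat n := madd (idm n) (mscale t A).

Section Resolvent.
Variables (n : nat) (t L : R) (Hx G S : mat n).
Hypotheses (hH : opnorm_le Hx L) (t_ge0 : 0 <= t) (tL_small : 8 * L * t <= 1).
Hypothesis hG : is_inverse (mm (shift t Hx) (shift t Hx)) G.
Hypothesis hS : is_pd_sqrt S G.

Lemma opnorm_le_shift : opnorm_le (shift t Hx) (9/8).
Proof.
apply: (opnorm_le_weaken _ (opnorm_le_madd (@opnorm_le_idm n) (opnorm_le_mscale t hH))).
by rewrite Rabs_pos_eq //; lra.
Qed.

Lemma shift_lower w : 7/8 * vnorm w <= vnorm (mv (shift t Hx) w).
Proof.
have w_eq : w = vsub (mv (shift t Hx) w) (vscale t (mv Hx w)).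
  apply: functional_extensionality => i.
  by rewrite /shift mv_madd mv_mscale mv_idm /vsub /vadd /vscale; ring.
have := vnorm_vsub (mv (shift t Hx) w) (vscale t (mv Hx w)); rewrite -w_eq.
by rewrite vnorm_vscale Rabs_pos_eq //; have := hH w; have := vnorm_ge0 w; nra.
Qed.

Lemma opnorm_le_resolvent : opnorm_le G (64/49).
Proof.
have -> : 64/49 = / (7/8 * (7/8)) by field.
apply: (opnorm_le_inverse (A := mm (shift t Hx) (shift t Hx))); [lra | move=> w |].
- rewrite mv_mm Rmult_assoc; apply: Rle_trans (shift_lower _).
  by apply: Rmult_le_compat_l; [lra | apply: shift_lower].
- by case: hG.
Qed.

Lemma quad_resolvent_bounds v :
  3/4 * (vnorm v * vnorm v) <= quad G v <= 4/3 * (vnorm v * vnorm v).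
Proof.
have vv_ge0 : 0 <= vnorm v * vnorm v by have := vnorm_ge0 v; nra.
split; last by have := quad_le_opnorm v opnorm_le_resolvent; lra.
have B2 := opnorm_le_mm (ltac:(lra) : 0 <= 9/8) opnorm_le_shift opnorm_le_shift.
by have := quad_inverse_ge v hG hS B2; lra.
Qed.

Lemma opnorm_le_resolvent_sqrt : opnorm_le S (8/7).
Proof.
apply: opnorm_le_pd_sqrt hS _; first lra.
by apply: (opnorm_le_weaken _ opnorm_le_resolvent); lra.
Qed.

End Resolvent.

Section DerivativeCalculus.
Variable n : nat.

Lemma derivable_pt_lim_rsum (F : 'I_n -> R -> R) dF s0 :
  (forall i, derivable_pt_lim (F i) s0 (dF i)) ->
  derivable_pt_lim (fun s => rsum (fun i => F i s)) s0 (rsum dF).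
Proof.
move=> dFi; rewrite /rsum; elim: (index_enum _) => [|a r IHr].
  rewrite big_nil; apply: derivable_pt_lim_ext (derivable_pt_lim_const 0 s0) => s.
  by rewrite big_nil.
rewrite big_cons.
apply: derivable_pt_lim_ext (derivable_pt_lim_plus _ _ _ _ _ (dFi a) IHr) => s.
by rewrite big_cons.
Qed.

Lemma derivable_pt_lim_mm {F K : R -> mat n} {dF dK : mat n} {s0 : R} :
  (forall i j, derivable_pt_lim (fun s => F s i j) s0 (dF i j)) ->
  (forall i j, derivable_pt_lim (fun s => K s i j) s0 (dK i j)) ->
  forall i j, derivable_pt_lim (fun s => mm (F s) (K s) i j) s0
                (madd (mm dF (K s0)) (mm (F s0) dK) i j).
Proof.
move=> dFij dKij i j; rewrite /madd /mm -rsum_plus.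
by apply: derivable_pt_lim_rsum => l; apply: derivable_pt_lim_mult.
Qed.

(* Differentiating G(s) A(s) = I gives dG A + G dA = 0. *)
Lemma derivable_pt_lim_inverse {A G : R -> mat n} {dA dG : mat n} :
  (forall s, mm (G s) (A s) = idm n) -> mm (A 0) (G 0) = idm n ->
  (forall i j, derivable_pt_lim (fun s => A s i j) 0 (dA i j)) ->
  (forall i j, derivable_pt_lim (fun s => G s i j) 0 (dG i j)) ->
  dG = mm (mscale (-1) (mm (G 0) dA)) (G 0).
Proof.
move=> GA1 AG1 dAij dGij.
have dGA_eq : mm dG (A 0) = mscale (-1) (mm (G 0) dA).
  apply: functional_extensionality => i; apply: functional_extensionality => m.
  have dGA0 : madd (mm dG (A 0)) (mm (G 0) dA) i m = 0.
    apply: (uniqueness_limite _ _ _ _ (derivable_pt_lim_mm dGij dAij i m)).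
    apply: derivable_pt_lim_ext (derivable_pt_lim_const (idm n i m) 0) => s.
    by rewrite GA1.
  by move: dGA0; rewrite /madd /mscale; lra.
by rewrite -[dG]mm_idm_r -AG1 -mm_assoc dGA_eq.
Qed.

End DerivativeCalculus.

Section ThirdDerivative.
Variables (n : nat) (H : vec n -> mat n) (T : vec n -> 'I_n -> mat n).
Hypothesis hD : has_mderiv H T.

Lemma vadd_vscale0 (x : vec n) (k : 'I_n) : vadd x (vscale 0 (basis k)) = x.
Proof. by apply: functional_extensionality => i; rewrite /vadd /vscale; ring. Qed.

Lemma vnorm_vscale_basis s (k : 'I_n) : vnorm (vscale s (basis k)) = Rabs s.
Proof. by rewrite vnorm_vscale vnorm_basis Rmult_1_r. Qed.

Lemma rsum_vscale_basis s (k : 'I_n) (F : 'I_n -> R) :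
  rsum (fun i => vscale s (basis k) i * F i) = s * F k.
Proof.
rewrite (@rsum_ext _ _ (fun i => if i == k then s * F i else 0)) ?rsum_delta //.
by move=> i; rewrite /vscale /basis; case: (i == k); ring.
Qed.

Lemma mderiv_partial x k j m :
  derivable_pt_lim (fun s => H (vadd x (vscale s (basis k))) j m) 0 (T x k j m).
Proof.
move=> eps eps_gt0; have [d [d_gt0 hd]] := @hD x (eps / 2) ltac:(lra).
exists (mkposreal d d_gt0) => s s_neq0 /= s_lt_d.
have s_abs_gt0 : 0 < Rabs s by apply: Rabs_pos_lt.
have := hd (vscale s (basis k)); rewrite vnorm_vscale_basis => /(_ s_lt_d) rem_le.
have := Rle_trans _ _ _ (Rabs_entry_le_mnorm _ j m) rem_le.
rewrite /= rsum_vscale_basis Rplus_0_l vadd_vscale0 => entry_le.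
have -> : (H (vadd x (vscale s (basis k))) j m - H x j m) / s - T x k j m =
          (H (vadd x (vscale s (basis k))) j m - H x j m - s * T x k j m) / s by field.
rewrite /Rdiv Rabs_mult Rabs_inv; apply: (Rmult_lt_reg_r (Rabs s)) => //.
by rewrite Rmult_assoc Rinv_l; nra.
Qed.

(* Differentiating H along s e_k: s T_k = (H(x + s e_k) - H(x)) - o(s), where the
   first term has operator norm at most M s by the Lipschitz bound. *)
Lemma opnorm_le_mderiv M :
  (forall x y, opnorm_le (msub (H x) (H y)) (M * vnorm (vsub x y))) ->
  forall x k, opnorm_le (T x k) M.
Proof.
move=> hLip x k.
have near : forall e, 0 < e -> opnorm_le (T x k) (M + e).
  move=> e e_gt0; have [d [d_gt0 hd]] := @hD x e e_gt0.
  set s := d / 2; set h := vscale s (basis k).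
  have h_norm : vnorm h = s by rewrite /h vnorm_vscale_basis Rabs_pos_eq /s; lra.
  have := hd h; rewrite h_norm => /(_ ltac:(rewrite /s; lra)).
  set Phi := (fun j m => _) => Phi_le.
  have diff_le := hLip (vadd x h) x.
  have dist_xh : vnorm (vsub (vadd x h) x) = s.
    by rewrite -h_norm; apply: vnorm_ext => i; rewrite /vsub /vadd; ring.
  rewrite dist_xh in diff_le.
  have sT_eq : mscale s (T x k) = msub (msub (H (vadd x h)) (H x)) Phi.
    apply: functional_extensionality => j; apply: functional_extensionality => m.
    by rewrite /msub /mscale /Phi rsum_vscale_basis; ring.
  have sT_le : opnorm_le (mscale s (T x k)) (M * s + e * s).
    rewrite sT_eq; apply: opnorm_le_msub diff_le _.
    exact: opnorm_le_weaken Phi_le (opnorm_le_mnorm Phi).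
  move=> v; have := sT_le v; rewrite mv_mscale vnorm_vscale Rabs_pos_eq /s; last lra.
  by have := vnorm_ge0 v; have := vnorm_ge0 (mv (T x k) v); nra.
move=> v; apply: Rle_plus_epsilon => eps eps_gt0.
have v_ge0 := vnorm_ge0 v.
have e_gt0 : 0 < eps / (vnorm v + 1) by apply: Rdiv_lt_0_compat; lra.
apply: Rle_trans (near _ e_gt0 v) _.
have : eps / (vnorm v + 1) * vnorm v <= eps.
  apply: (Rmult_le_reg_r (vnorm v + 1)); first lra.
  by rewrite /Rdiv; field_simplify; lra.
lra.
Qed.

End ThirdDerivative.

Section ResolventDerivative.
Variables (n : nat) (H : vec n -> mat n) (T : vec n -> 'I_n -> mat n) (L M t : R).
Variables (G : vec n -> mat n) (DG : vec n -> 'I_n -> 'I_n -> 'I_n -> R).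
Hypotheses (hD : has_mderiv H T) (hH : forall x, opnorm_le (H x) L).
Hypotheses (hT : forall x k, opnorm_le (T x k) M) (M_ge0 : 0 <= M).
Hypotheses (t_ge0 : 0 <= t) (tL_small : 8 * L * t <= 1).
Hypothesis hG : forall x, is_inverse (mm (shift t (H x)) (shift t (H x))) (G x).
Hypothesis hDG : forall x i j k, has_partial (fun y => G y i j) x k (DG x i j k).

Lemma partial_resolvent x k :
  (fun i j => DG x i j k) =
  mm (mscale (-1) (mm (G x) (madd (mm (mscale t (T x k)) (shift t (H x)))
                                  (mm (shift t (H x)) (mscale t (T x k)))))) (G x).
Proof.
have dshift : forall i j, derivable_pt_lim
    (fun s => shift t (H (vadd x (vscale s (basis k)))) i j) 0 (mscale t (T x k) i j).
  move=> i j; have := derivable_pt_lim_plus _ _ _ _ _ (derivable_pt_lim_const (idm n i j) 0)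
    (derivable_pt_lim_scal _ t _ _ (mderiv_partial hD x k i j)).
  by rewrite Rplus_0_l; apply: derivable_pt_lim_ext.
have := derivable_pt_lim_inverse (G := fun s => G (vadd x (vscale s (basis k)))) _ _
  (derivable_pt_lim_mm dshift dshift) (fun i j => hDG x i j k).
rewrite !vadd_vscale0; apply=> [s|]; first by case: (hG (vadd x (vscale s (basis k)))).
by case: (hG x).
Qed.

Lemma opnorm_le_partial_resolvent x k : opnorm_le (fun i j => DG x i j k) (4 * t * M).
Proof.
have tT : opnorm_le (mscale t (T x k)) (t * M).
  by have := opnorm_le_mscale t (hT x k); rewrite Rabs_pos_eq.
have B := opnorm_le_shift (hH x) t_ge0 tL_small.
have tM_ge0 : 0 <= t * M by apply: Rmult_le_pos.
have dA := opnorm_le_madd (opnorm_le_mm tM_ge0 tT B) (opnorm_le_mm (ltac:(lra) : 0 <= 9/8) B tT).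
have Gx := opnorm_le_resolvent (hH x) t_ge0 tL_small (hG x).
have GdA := opnorm_le_mm (ltac:(lra) : 0 <= 64/49) Gx dA.
have := opnorm_le_mm _ (opnorm_le_mscale (-1) GdA) Gx.
rewrite partial_resolvent Rabs_Ropp Rabs_R1 => /(_ ltac:(nra)).
by apply: opnorm_le_weaken; nra.
Qed.

End ResolventDerivative.

Unset Implicit Arguments.

Theorem lemma5 (n : nat) (f : vec n -> R) (g : vec n -> vec n) (H : vec n -> mat n)
  (T : vec n -> 'I_n -> mat n) (L M t : R)
  (Hsmooth : LM_smooth f g H T L M)
  (ht0 : 0 <= t) (htL : 8 * L * t <= 1) (htM : M * t <= 1)
  (G : vec n -> mat n)
  (HG : forall x, is_inverse (mm (madd (idm n) (mscale t (H x)))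
                                 (madd (idm n) (mscale t (H x)))) (G x))
  (S : vec n -> mat n) (HS : forall x, is_pd_sqrt (S x) (G x))
  (DG : vec n -> 'I_n -> 'I_n -> 'I_n -> R)
  (HDG : forall x i j k, has_partial (fun y => G y i j) x k (DG x i j k)) :
  forall x : vec n,
    (forall v : vec n, 3 / 4 * (vnorm v * vnorm v) <= quad (G x) v
                       <= 4 / 3 * (vnorm v * vnorm v)) /\
    vnorm (mu_tilde t (g x) (H x) (T x) (G x) (S x) (DG x))
      <= 4 / 3 * t * L * vnorm (g x) + 6 * t * (INR n * sqrt (INR n)) * M.
Proof.
move=> x; case: Hsmooth => _ [_ [hD [hH hLip]]].
have hT := opnorm_le_mderiv hD hLip.
split; first exact: (quad_resolvent_bounds (hH x) ht0 htL (HG x) (HS x)).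
have [n0|n_gt0] := posnP n.
  by subst n; rewrite !vnorm_vec0 /= sqrt_0; lra.
have L_ge0 := opnorm_le_ge0 n_gt0 (hH x).
have M_ge0 := opnorm_le_ge0 n_gt0 (hT x (Ordinal n_gt0)).
have Gx := opnorm_le_resolvent (hH x) ht0 htL (HG x).
set N := INR n * sqrt (INR n).
have N_ge0 : 0 <= N by apply: Rmult_le_pos; [apply: pos_INR | apply: sqrt_pos].
have drift : vnorm (vscale (- t) (mv (mm (H x) (G x)) (g x))) <= 4/3 * t * L * vnorm (g x).
  rewrite vnorm_vscale Rabs_Ropp Rabs_pos_eq //.
  have := opnorm_le_mm L_ge0 (hH x) Gx (g x); have := vnorm_ge0 (g x).
  have : 0 <= t * L by apply: Rmult_le_pos.
  nra.
have trace_term : vnorm (vscale t (mv (S x) (tr3 (T x) (G x)))) <= 2 * t * N * M.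
  rewrite vnorm_vscale Rabs_pos_eq //.
  have := opnorm_le_resolvent_sqrt (hH x) ht0 htL (HG x) (HS x) (tr3 (T x) (G x)).
  have := vnorm_tr3_le M_ge0 (ltac:(lra) : 0 <= 64/49) (hT x) Gx.
  have := vnorm_ge0 (tr3 (T x) (G x)); rewrite -/N; nra.
have div_term : vnorm (mdiv (DG x)) <= 4 * t * N * M.
  have := vnorm_mdiv_le (ltac:(nra) : 0 <= 4 * t * M)
    (opnorm_le_partial_resolvent G DG hD hH hT M_ge0 ht0 htL HG HDG x).
  by rewrite -/N; lra.
rewrite /mu_tilde; apply: Rle_trans (vnorm_vsub _ _) _.
by have := vnorm_vsub (vscale (- t) (mv (mm (H x) (G x)) (g x)))
  (vscale t (mv (S x) (tr3 (T x) (G x)))); lra.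
Qed.
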